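(* Let $r\ge 1$ and $K\ge 1$ be integers, $\beta_1,\beta_2>0$, $\alpha_2>0$ and $\theta_1,\theta_2>0$. Let $\zeta=(1,0,0)$, $\eta=(0,0,1)$, $v'=(0,1,0)$, and for $i=1,\dots,r$ let $k_i=2^{i-1}K\zeta$ and $k_i'=k_i+\eta$. Define \[ E_1(x,t)=-\frac{r^{-\beta_1-\beta_2}}{2}\sum_{\substack{i,j=1\\ i\ne j}}^r|k_i|^{\theta_1}|k_j'|^{\theta_2}e^{-(|k_i|^{2\alpha_2}+|k_j'|^{2\alpha_2})t}\sin((k_j'-k_i)\cdot x)\,v', \] \[ E_2(x,t)=-\frac{r^{-\beta_1-\beta_2}}{2}\sum_{i=1}^r\sum_{j=1}^r|k_i|^{\theta_1}|k_j'|^{\theta_2}e^{-(|k_i|^{2\alpha_2}+|k_j'|^{2\alpha_2})t}\sin((k_j'+k_i)\cdot x)\,v', \] and for $m=1,2$ \[ b_{1m}(x,t)=\int_0^t e^{-(t-\tau)(-\Delta)^{\alpha_2}}E_m(x,\tau)\,d\tau . \] Then for all $t>0$, \[ \|b_{11}(\cdot,t)\|_{L^\infty}+\|b_{12}(\cdot,t)\|_{L^\infty}\lesssim r^{-\beta_1-\beta_2}\,t^{1-\frac{\theta_1+\theta_2}{2\alpha_2}}, \] with implicit constant independent of $r$, $K$ and $t$.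
   Context: $e^{-t(-\Delta)^\alpha}$ is the fractional heat semigroup (Fourier multiplier $e^{-t|\xi|^{2\alpha}}$); in particular $e^{-t(-\Delta)^\alpha}\big(w\sin(k\cdot x)\big)=e^{-|k|^{2\alpha}t}w\sin(k\cdot x)$. *)

From Stdlib Require Import Reals Lra List.
From Coquelicot Require Import Coquelicot.
Open Scope R_scope.

Definition vec3 := (R * R * R)%type.
Definition v3 (a b c : R) : vec3 := (a, b, c).
Definition c1 (u : vec3) : R := fst (fst u).
Definition c2 (u : vec3) : R := snd (fst u).
Definition c3 (u : vec3) : R := snd u.
Definition vadd (u w : vec3) : vec3 := v3 (c1 u + c1 w) (c2 u + c2 w) (c3 u + c3 w).
Definition vsub (u w : vec3) : vec3 := v3 (c1 u - c1 w) (c2 u - c2 w) (c3 u - c3 w).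
Definition vscale (a : R) (u : vec3) : vec3 := v3 (a * c1 u) (a * c2 u) (a * c3 u).
Definition vzero : vec3 := v3 0 0 0.
Definition dot (u w : vec3) : R := c1 u * c1 w + c2 u * c2 w + c3 u * c3 w.
Definition norm3 (u : vec3) : R := sqrt (dot u u).

(* |q|^s, with the convention 0^s = 0 (only used for s > 0). *)
Definition npow (q : vec3) (s : R) : R :=
  if Req_EM_T (norm3 q) 0 then 0 else Rpower (norm3 q) s.

Definition zeta : vec3 := v3 1 0 0.
Definition eta : vec3 := v3 0 0 1.
Definition vprime : vec3 := v3 0 1 0.

Definition kk (K : nat) (i : nat) : vec3 := vscale (2 ^ (i - 1) * INR K) zeta.
Definition kk' (K : nat) (i : nat) : vec3 := vadd (kk K i) eta.

(* Vector-valued sine polynomials: a list of modes (c, q, w) representing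
   x |-> sum c * sin (q . x) * w. *)
Definition sinpoly := list (R * vec3 * vec3).
Definition eval_sinpoly (p : sinpoly) (x : vec3) : vec3 :=
  fold_right (fun m acc => vadd (vscale (fst (fst m) * sin (dot (snd (fst m)) x)) (snd m)) acc)
             vzero p.

(* The fractional heat semigroup e^{-t(-Delta)^alpha} acting on sine polynomials
   (Fourier multiplier e^{-t|xi|^{2 alpha}}):
   e^{-t(-Delta)^alpha}(w sin(q.x)) = e^{-|q|^{2 alpha} t} w sin(q.x). *)
Definition frac_heat (alpha t : R) (p : sinpoly) : sinpoly :=
  map (fun m => (exp (- (npow (snd (fst m)) (2 * alpha)) * t) * fst (fst m),
                 snd (fst m), snd m)) p.

Definition RInt3 (f : R -> vec3) (a b : R) : vec3 :=
  v3 (RInt (fun s => c1 (f s)) a b) (RInt (fun s => c2 (f s)) a b)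
     (RInt (fun s => c3 (f s)) a b).

Definition idx (r : nat) : list nat := seq 1 r.

Definition coefE (r K : nat) (b1 b2 a2 th1 th2 tau : R) (i j : nat) : R :=
  - (Rpower (INR r) (- b1 - b2) / 2) * npow (kk K i) th1 * npow (kk' K j) th2
  * exp (- (npow (kk K i) (2 * a2) + npow (kk' K j) (2 * a2)) * tau).

Definition E1 (r K : nat) (b1 b2 a2 th1 th2 tau : R) : sinpoly :=
  flat_map (fun i =>
    flat_map (fun j =>
      if Nat.eqb i j then nil
      else (coefE r K b1 b2 a2 th1 th2 tau i j, vsub (kk' K j) (kk K i), vprime) :: nil)
    (idx r)) (idx r).

Definition E2 (r K : nat) (b1 b2 a2 th1 th2 tau : R) : sinpoly :=
  flat_map (fun i =>
    map (fun j => (coefE r K b1 b2 a2 th1 th2 tau i j, vadd (kk' K j) (kk K i), vprime))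
    (idx r)) (idx r).

Definition duhamel (a2 : R) (E : R -> sinpoly) (x : vec3) (t : R) : vec3 :=
  RInt3 (fun tau => eval_sinpoly (frac_heat a2 (t - tau) (E tau)) x) 0 t.

Definition b11 (r K : nat) (b1 b2 a2 th1 th2 : R) (x : vec3) (t : R) : vec3 :=
  duhamel a2 (E1 r K b1 b2 a2 th1 th2) x t.
Definition b12 (r K : nat) (b1 b2 a2 th1 th2 : R) (x : vec3) (t : R) : vec3 :=
  duhamel a2 (E2 r K b1 b2 a2 th1 th2) x t.

(* After integrating in time, the mode (i, j) of either Duhamel term is at most
   t r^{-β1-β2} w_{θ1}(|k_i|) w_{θ2}(|k_j|) with w_θ(u) ≈ u^θ e^{-c u^{2α} t}:
   the decay rate of the forcing and the heat damping on the output frequency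
   both dominate (|k_i|^{2α} + |k_j|^{2α})/2 up to constants, the latter because
   |k_j' ± k_i| ≥ max(|k_i|, |k_j|)/2 (for k_j' - k_i this is the dyadic
   separation of the |k_i|, which is why E_1 excludes i = j).
   The double sum therefore factorises, and a dyadic sum Σ_i w_θ(2^i K) is
   bounded by C t^{-θ/(2α)} uniformly in r and K: after rescaling,
   g(s) = s^θ e^{-s^{2α}/2} is dominated by C (Φ(2s) − Φ(s)) with
   Φ(s) = s^θ/(1 + s^θ), so the dyadic sum telescopes. *)
From Pilot Require Import Defs.
From Stdlib Require Import Reals Lra Lia List.
From Coquelicot Require Import Coquelicot.
Open Scope R_scope.

(* The imports shadow [Defs.c1] (by Coquelicot) and [Defs.E1] (by Stdlib's exponential series). *)

Definition sum_list {A} (f : A -> R) (l : list A) : R :=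
  fold_right (fun a acc => f a + acc) 0 l.

Section SumList.
Context {A : Type}.
Implicit Types (f g : A -> R) (l : list A).

Lemma sum_list_app f l1 l2 : sum_list f (l1 ++ l2) = sum_list f l1 + sum_list f l2.
Proof. induction l1 as [|a l1 IH]; simpl; [ring | rewrite IH; ring]. Qed.

Lemma sum_list_map {B} f (h : B -> A) (l : list B) :
  sum_list f (map h l) = sum_list (fun b => f (h b)) l.
Proof. induction l as [|b l IH]; simpl; [ring | rewrite IH; ring]. Qed.

Lemma sum_list_flat_map {B} f (h : B -> list A) (l : list B) :
  sum_list f (flat_map h l) = sum_list (fun b => sum_list f (h b)) l.
Proof. induction l as [|b l IH]; simpl; [ring | rewrite sum_list_app, IH; ring]. Qed.

Lemma sum_list_ext f g l : (forall a, In a l -> f a = g a) -> sum_list f l = sum_list g l.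
Proof. induction l as [|a l IH]; simpl; intros H; [ring|]. rewrite H, IH; auto. Qed.

Lemma sum_list_le f g l : (forall a, In a l -> f a <= g a) -> sum_list f l <= sum_list g l.
Proof.
  induction l as [|a l IH]; simpl; intros H; [lra|].
  pose proof (H a (or_introl eq_refl)). pose proof (IH (fun b hb => H b (or_intror hb))). lra.
Qed.

Lemma sum_list_nonneg f l : (forall a, In a l -> 0 <= f a) -> 0 <= sum_list f l.
Proof.
  induction l as [|a l IH]; simpl; intros H; [lra|].
  pose proof (H a (or_introl eq_refl)). pose proof (IH (fun b hb => H b (or_intror hb))). lra.
Qed.

Lemma Rabs_sum_list_le f l : Rabs (sum_list f l) <= sum_list (fun a => Rabs (f a)) l.
Proof.
  induction l as [|a l IH]; simpl; [rewrite Rabs_R0; lra|].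
  eapply Rle_trans; [apply Rabs_triang | lra].
Qed.

Lemma sum_list_scal_l c f l : sum_list (fun a => c * f a) l = c * sum_list f l.
Proof. induction l as [|a l IH]; simpl; [ring | rewrite IH; ring]. Qed.

Lemma RInt_sum_list (h : A -> R -> R) l a b :
  (forall z, In z l -> ex_RInt (h z) a b) ->
  ex_RInt (fun s => sum_list (fun z => h z s) l) a b /\
  RInt (fun s => sum_list (fun z => h z s) l) a b = sum_list (fun z => RInt (h z) a b) l.
Proof.
  induction l as [|z l IH]; simpl; intros H.
  - split; [apply ex_RInt_const|].
    rewrite RInt_const. unfold scal; simpl; unfold mult; simpl; ring.
  - destruct (IH (fun y hy => H y (or_intror hy))) as [Hex Heq].
    pose proof (H z (or_introl eq_refl)) as Hz.
    split.
    + exact (ex_RInt_plus (h z) _ a b Hz Hex).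
    + rewrite <- Heq. exact (RInt_plus (h z) _ a b Hz Hex).
Qed.

End SumList.

Lemma Rabs_RInt_double_sum_le (h : nat -> nat -> R -> R) (l : list nat) t c (X Y : nat -> R) :
  (forall i j, In i l -> In j l ->
     ex_RInt (h i j) 0 t /\ Rabs (RInt (h i j) 0 t) <= c * (X i * Y j)) ->
  Rabs (RInt (fun tau => sum_list (fun i => sum_list (fun j => h i j tau) l) l) 0 t)
    <= c * (sum_list X l * sum_list Y l).
Proof.
  intros H.
  assert (Hrow : forall i, In i l ->
     ex_RInt (fun tau => sum_list (fun j => h i j tau) l) 0 t /\
     RInt (fun tau => sum_list (fun j => h i j tau) l) 0 t = sum_list (fun j => RInt (h i j) 0 t) l).
  { intros i Hi. apply RInt_sum_list. intros j Hj. apply (H i j Hi Hj). }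
  rewrite (proj2 (RInt_sum_list _ l 0 t (fun i Hi => proj1 (Hrow i Hi)))).
  eapply Rle_trans; [apply Rabs_sum_list_le|].
  eapply Rle_trans.
  { apply sum_list_le. intros i Hi. rewrite (proj2 (Hrow i Hi)).
    eapply Rle_trans; [apply Rabs_sum_list_le|].
    apply sum_list_le. intros j Hj. exact (proj2 (H i j Hi Hj)). }
  right.
  rewrite (sum_list_ext _ (fun i => (c * sum_list Y l) * X i)).
  - rewrite sum_list_scal_l. ring.
  - intros i _. rewrite <- sum_list_scal_l, Rmult_comm, <- sum_list_scal_l.
    apply sum_list_ext. intros; ring.
Qed.

Lemma exp_le_exp_of_le x y : x <= y -> exp x <= exp y.
Proof. intros [H|H]; [left; apply exp_increasing; exact H | subst; lra]. Qed.

Lemma RInt_damped_mode_le Q P c s t mu :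
  0 < t -> mu <= Q -> mu <= P -> Rabs s <= 1 ->
  ex_RInt (fun tau => exp (- Q * (t - tau)) * (c * exp (- P * tau)) * s) 0 t /\
  Rabs (RInt (fun tau => exp (- Q * (t - tau)) * (c * exp (- P * tau)) * s) 0 t)
    <= t * (Rabs c * exp (- mu * t)).
Proof.
  intros Ht HQ HP Hs.
  assert (Hex : ex_RInt (fun tau => exp (- Q * (t - tau)) * (c * exp (- P * tau)) * s) 0 t).
  { apply (@ex_RInt_continuous R_CompleteNormedModule). intros z _.
    apply (@ex_derive_continuous R_AbsRing R_NormedModule). auto_derive. auto. }
  split; [exact Hex|].
  replace (t * (Rabs c * exp (- mu * t))) with ((t - 0) * (Rabs c * exp (- mu * t))) by ring.
  apply abs_RInt_le_const; [lra | exact Hex|].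
  intros tau Htau.
  rewrite !Rabs_mult, (Rabs_pos_eq (exp (- Q * _))), (Rabs_pos_eq (exp (- P * tau)))
    by (left; apply exp_pos).
  assert (Hdecay : exp (- Q * (t - tau)) * exp (- P * tau) <= exp (- mu * t)).
  { rewrite <- exp_plus. apply exp_le_exp_of_le.
    pose proof (Rmult_le_pos (Q - mu) (t - tau) ltac:(lra) ltac:(lra)).
    pose proof (Rmult_le_pos (P - mu) tau ltac:(lra) ltac:(lra)). lra. }
  pose proof (Rabs_pos c). pose proof (Rabs_pos s).
  pose proof (exp_pos (- Q * (t - tau))). pose proof (exp_pos (- P * tau)).
  assert (Rabs c * (exp (- Q * (t - tau)) * exp (- P * tau)) * Rabs s
          <= Rabs c * exp (- mu * t) * 1).
  { apply Rmult_le_compat; [apply Rmult_le_pos; [lra | apply Rmult_le_pos; lra] | lra |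
      apply Rmult_le_compat_l; auto | auto]. }
  lra.
Qed.

Lemma Rpower_pos x y : 0 < Rpower x y.
Proof. apply exp_pos. Qed.

Lemma Rabs_c1_le_norm3 q : Rabs (Defs.c1 q) <= norm3 q.
Proof. unfold norm3, dot. rewrite <- sqrt_Rsqr_abs. apply sqrt_le_1_alt. unfold Rsqr. nra. Qed.

Lemma norm3_v3_0_y_0 y : norm3 (v3 0 y 0) = Rabs y.
Proof.
  unfold norm3, dot, v3, Defs.c1, Defs.c2, Defs.c3; simpl.
  rewrite <- sqrt_Rsqr_abs. unfold Rsqr. f_equal; ring.
Qed.

Lemma npow_nonneg q s : 0 <= npow q s.
Proof. unfold npow. destruct (Req_EM_T (norm3 q) 0); [lra | left; apply Rpower_pos]. Qed.

Lemma npow_ge q s L : 0 <= s -> 0 < L -> L <= norm3 q -> Rpower L s <= npow q s.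
Proof. intros. unfold npow. destruct (Req_EM_T (norm3 q) 0); [lra | apply Rle_Rpower_l; lra]. Qed.

Lemma npow_le q s U : 0 <= s -> 0 < norm3 q -> norm3 q <= U -> npow q s <= Rpower U s.
Proof. intros. unfold npow. destruct (Req_EM_T (norm3 q) 0); [lra | apply Rle_Rpower_l; lra]. Qed.

(* |k_i|, and also the first coordinate of k_i'. *)
Definition dyad (K i : nat) : R := 2 ^ (i - 1) * INR K.

Lemma dyad_ge1 K i : (1 <= K)%nat -> 1 <= dyad K i.
Proof.
  intros HK. unfold dyad. pose proof (pow_R1_Rle 2 (i - 1) ltac:(lra)).
  pose proof (le_INR _ _ HK). simpl in *. nra.
Qed.

Lemma c1_kk K i : Defs.c1 (kk K i) = dyad K i.
Proof. unfold kk, vscale, zeta, v3, Defs.c1; simpl. fold (dyad K i). ring. Qed.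

Lemma c1_kk' K i : Defs.c1 (kk' K i) = dyad K i.
Proof. unfold kk', kk, vadd, vscale, zeta, eta, v3, Defs.c1; simpl. fold (dyad K i). ring. Qed.

Lemma norm3_kk K i : norm3 (kk K i) = dyad K i.
Proof.
  assert (Hd : 0 <= dyad K i) by (apply Rmult_le_pos; [apply pow_le; lra | apply pos_INR]).
  unfold norm3, dot, kk, vscale, zeta, v3, Defs.c1, Defs.c2, Defs.c3; simpl. fold (dyad K i).
  transitivity (sqrt (dyad K i * dyad K i)); [f_equal; ring | exact (sqrt_square _ Hd)].
Qed.

Lemma norm3_kk'_bounds K j : (1 <= K)%nat -> dyad K j <= norm3 (kk' K j) <= 2 * dyad K j.
Proof.
  intros HK. pose proof (dyad_ge1 K j HK). split.
  - rewrite <- (c1_kk' K j). eapply Rle_trans; [apply Rle_abs | apply Rabs_c1_le_norm3].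
  - unfold norm3, dot, kk', kk, vadd, vscale, zeta, eta, v3, Defs.c1, Defs.c2, Defs.c3; simpl.
    fold (dyad K j). rewrite <- (sqrt_square (2 * dyad K j)) by lra. apply sqrt_le_1_alt. nra.
Qed.

Lemma pow2_separated m n : m <> n -> 2 ^ m <= 2 * Rabs (2 ^ n - 2 ^ m).
Proof.
  assert (Hlt : forall a b, (a < b)%nat -> 2 * 2 ^ a <= 2 ^ b).
  { intros a b Hab. change (2 * 2 ^ a) with (2 ^ S a). apply Rle_pow; [lra | lia]. }
  intros Hmn. pose proof (pow_lt 2 m ltac:(lra)). pose proof (pow_lt 2 n ltac:(lra)).
  destruct (Nat.lt_total m n) as [Hmn'|[Hmn'|Hmn']]; [| lia |].
  - pose proof (Hlt m n Hmn'). rewrite Rabs_pos_eq; lra.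
  - pose proof (Hlt n m Hmn'). rewrite Rabs_minus_sym, Rabs_pos_eq; lra.
Qed.

Lemma norm3_sum_freq_ge K i j :
  dyad K i + dyad K j <= norm3 (vadd (kk' K j) (kk K i)).
Proof.
  eapply Rle_trans; [| apply Rabs_c1_le_norm3].
  change (Defs.c1 (vadd (kk' K j) (kk K i))) with (Defs.c1 (kk' K j) + Defs.c1 (kk K i)).
  rewrite c1_kk', c1_kk, Rplus_comm. apply Rle_abs.
Qed.

Lemma norm3_diff_freq_ge K i j : (1 <= i)%nat -> (1 <= j)%nat -> i <> j ->
  dyad K i / 2 <= norm3 (vsub (kk' K j) (kk K i)) /\
  dyad K j / 2 <= norm3 (vsub (kk' K j) (kk K i)).
Proof.
  intros Hi Hj Hij.
  assert (Hgap : Rabs (dyad K j - dyad K i) <= norm3 (vsub (kk' K j) (kk K i))).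
  { eapply Rle_trans; [| apply Rabs_c1_le_norm3].
    change (Defs.c1 (vsub (kk' K j) (kk K i))) with (Defs.c1 (kk' K j) - Defs.c1 (kk K i)).
    rewrite c1_kk', c1_kk. lra. }
  assert (HK := pos_INR K).
  assert (Hscale : Rabs (dyad K j - dyad K i) = Rabs (2 ^ (j - 1) - 2 ^ (i - 1)) * INR K).
  { unfold dyad. rewrite <- Rmult_minus_distr_r, Rabs_mult, (Rabs_pos_eq (INR K)); lra. }
  pose proof (pow2_separated (i - 1) (j - 1) ltac:(lia)) as Hsep_i.
  pose proof (pow2_separated (j - 1) (i - 1) ltac:(lia)) as Hsep_j.
  rewrite Rabs_minus_sym in Hsep_j.
  unfold dyad in *. split; nra.
Qed.

Definition amplitude (p : sinpoly) (x : vec3) : R :=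
  sum_list (fun m => fst (fst m) * sin (dot (snd (fst m)) x)) p.

Lemma eval_sinpoly_along_vprime p x : (forall m, In m p -> snd m = vprime) ->
  eval_sinpoly p x = v3 0 (amplitude p x) 0.
Proof.
  induction p as [|m p IH]; intros Hp; [reflexivity|].
  simpl. rewrite IH, (Hp m (or_introl eq_refl)) by (intros m' Hm'; exact (Hp m' (or_intror Hm'))).
  unfold vadd, vscale, vprime, v3, Defs.c1, Defs.c2, Defs.c3; simpl.
  f_equal; [f_equal|]; ring.
Qed.

Lemma RInt3_ext f g a b : (forall s, f s = g s) -> RInt3 f a b = RInt3 g a b.
Proof. intros H. unfold RInt3. f_equal; apply RInt_ext; intros s _; rewrite H; reflexivity. Qed.

Lemma norm3_duhamel_along_vprime a E x t :
  (forall tau m, In m (E tau) -> snd m = vprime) ->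
  norm3 (duhamel a E x t)
    = Rabs (RInt (fun tau => amplitude (frac_heat a (t - tau) (E tau)) x) 0 t).
Proof.
  intros HE.
  assert (Heval : forall tau, eval_sinpoly (frac_heat a (t - tau) (E tau)) x
                             = v3 0 (amplitude (frac_heat a (t - tau) (E tau)) x) 0).
  { intros tau. apply eval_sinpoly_along_vprime. intros m Hm.
    apply in_map_iff in Hm as [m' [<- Hm']]. exact (HE tau m' Hm'). }
  unfold duhamel. rewrite (RInt3_ext _ _ 0 t Heval).
  unfold RInt3; cbv [Defs.c1 Defs.c2 Defs.c3 v3 fst snd].
  rewrite RInt_const, <- norm3_v3_0_y_0.
  unfold scal; simpl; unfold mult; simpl. rewrite Rmult_0_r. reflexivity.
Qed.

Definition heat_mode (a : R) (q : vec3) (c s : R) (x : vec3) : R :=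
  exp (- npow q (2 * a) * s) * c * sin (dot q x).

Lemma amplitude_frac_heat a s p x :
  amplitude (frac_heat a s p) x = sum_list (fun m => heat_mode a (snd (fst m)) (fst (fst m)) s x) p.
Proof. unfold amplitude, frac_heat. rewrite sum_list_map. reflexivity. Qed.

Section Forcings.
Variables (r K : nat) (b1 b2 a2 th1 th2 : R).

Lemma E1_along_vprime tau m : In m (Defs.E1 r K b1 b2 a2 th1 th2 tau) -> snd m = vprime.
Proof.
  unfold Defs.E1. intros Hm. apply in_flat_map in Hm as [i [_ Hm]].
  apply in_flat_map in Hm as [j [_ Hm]].
  destruct (Nat.eqb i j); [contradiction | destruct Hm as [<- | []]; reflexivity].
Qed.

Lemma E2_along_vprime tau m : In m (Defs.E2 r K b1 b2 a2 th1 th2 tau) -> snd m = vprime.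
Proof.
  unfold Defs.E2. intros Hm. apply in_flat_map in Hm as [i [_ Hm]].
  apply in_map_iff in Hm as [j [<- _]]. reflexivity.
Qed.

Definition E1_mode (x : vec3) (s tau : R) (i j : nat) : R :=
  if Nat.eqb i j then 0
  else heat_mode a2 (vsub (kk' K j) (kk K i)) (coefE r K b1 b2 a2 th1 th2 tau i j) s x.

Definition E2_mode (x : vec3) (s tau : R) (i j : nat) : R :=
  heat_mode a2 (vadd (kk' K j) (kk K i)) (coefE r K b1 b2 a2 th1 th2 tau i j) s x.

Lemma amplitude_frac_heat_E1 s tau x :
  amplitude (frac_heat a2 s (Defs.E1 r K b1 b2 a2 th1 th2 tau)) x
    = sum_list (fun i => sum_list (fun j => E1_mode x s tau i j) (idx r)) (idx r).
Proof.
  rewrite amplitude_frac_heat. unfold Defs.E1. rewrite sum_list_flat_map.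
  apply sum_list_ext. intros i _. rewrite sum_list_flat_map.
  apply sum_list_ext. intros j _. unfold E1_mode.
  destruct (Nat.eqb i j); simpl; ring.
Qed.

Lemma amplitude_frac_heat_E2 s tau x :
  amplitude (frac_heat a2 s (Defs.E2 r K b1 b2 a2 th1 th2 tau)) x
    = sum_list (fun i => sum_list (fun j => E2_mode x s tau i j) (idx r)) (idx r).
Proof.
  rewrite amplitude_frac_heat. unfold Defs.E2. rewrite sum_list_flat_map.
  apply sum_list_ext. intros i _. rewrite sum_list_map.
  apply sum_list_ext. intros j _. unfold E2_mode. simpl. ring.
Qed.

End Forcings.

Definition mode_weight (a th t u : R) : R :=
  Rpower (2 * u) th * exp (- Rpower (u / 2) (2 * a) * t / 2).

Lemma mode_weight_nonneg a th t u : 0 <= mode_weight a th t u.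
Proof.
  unfold mode_weight. apply Rmult_le_pos; left; [apply Rpower_pos | apply exp_pos].
Qed.

Lemma Rabs_forcing_coef_le (r K : nat) b1 b2 th1 th2 i j :
  0 <= th1 -> 0 <= th2 -> (1 <= K)%nat ->
  Rabs (- (Rpower (INR r) (- b1 - b2) / 2) * npow (kk K i) th1 * npow (kk' K j) th2)
    <= Rpower (INR r) (- b1 - b2) / 2 * Rpower (2 * dyad K i) th1 * Rpower (2 * dyad K j) th2.
Proof.
  intros Ht1 Ht2 HK.
  pose proof (dyad_ge1 K i HK). pose proof (dyad_ge1 K j HK).
  destruct (norm3_kk'_bounds K j HK) as [Hkj_lo Hkj_hi].
  pose proof (Rpower_pos (INR r) (- b1 - b2)).
  pose proof (npow_nonneg (kk K i) th1). pose proof (npow_nonneg (kk' K j) th2).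
  pose proof (npow_le (kk K i) th1 (2 * dyad K i) Ht1
                ltac:(rewrite norm3_kk; lra) ltac:(rewrite norm3_kk; lra)).
  pose proof (npow_le (kk' K j) th2 (2 * dyad K j) Ht2 ltac:(lra) ltac:(lra)).
  rewrite !Rabs_mult, Rabs_Ropp, !Rabs_pos_eq by lra.
  apply Rmult_le_compat; try apply Rmult_le_compat; nra.
Qed.

Lemma RInt_heat_mode_le (r K : nat) b1 b2 a2 th1 th2 t x q i j :
  0 <= a2 -> 0 <= th1 -> 0 <= th2 -> (1 <= K)%nat -> 0 < t ->
  dyad K i / 2 <= norm3 q -> dyad K j / 2 <= norm3 q ->
  ex_RInt (fun tau => heat_mode a2 q (coefE r K b1 b2 a2 th1 th2 tau i j) (t - tau) x) 0 t /\
  Rabs (RInt (fun tau => heat_mode a2 q (coefE r K b1 b2 a2 th1 th2 tau i j) (t - tau) x) 0 t)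
    <= t * (Rpower (INR r) (- b1 - b2) / 2)
         * (mode_weight a2 th1 t (dyad K i) * mode_weight a2 th2 t (dyad K j)).
Proof.
  intros Ha Ht1 Ht2 HK Ht Hqi Hqj.
  pose proof (dyad_ge1 K i HK) as Hui. pose proof (dyad_ge1 K j HK) as Huj.
  destruct (norm3_kk'_bounds K j HK) as [Hkj _].
  set (Rp := Rpower (INR r) (- b1 - b2)).
  set (ei := Rpower (dyad K i / 2) (2 * a2)). set (ej := Rpower (dyad K j / 2) (2 * a2)).
  set (mu := (ei + ej) / 2).
  assert (HQ : mu <= npow q (2 * a2)).
  { pose proof (npow_ge q (2 * a2) (dyad K i / 2) ltac:(lra) ltac:(lra) Hqi).
    pose proof (npow_ge q (2 * a2) (dyad K j / 2) ltac:(lra) ltac:(lra) Hqj).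
    unfold mu, ei, ej. lra. }
  assert (HP : mu <= npow (kk K i) (2 * a2) + npow (kk' K j) (2 * a2)).
  { pose proof (npow_ge (kk K i) (2 * a2) (dyad K i / 2) ltac:(lra) ltac:(lra)
                  ltac:(rewrite norm3_kk; lra)).
    pose proof (npow_ge (kk' K j) (2 * a2) (dyad K j / 2) ltac:(lra) ltac:(lra) ltac:(lra)).
    pose proof (Rpower_pos (dyad K i / 2) (2 * a2)). pose proof (Rpower_pos (dyad K j / 2) (2 * a2)).
    unfold mu, ei, ej. lra. }
  set (c := - (Rp / 2) * npow (kk K i) th1 * npow (kk' K j) th2).
  pose proof (Rabs_forcing_coef_le r K b1 b2 th1 th2 i j Ht1 Ht2 HK) as Hc. fold Rp c in Hc.
  assert (Hsin : Rabs (sin (dot q x)) <= 1) by (apply Rabs_le; apply SIN_bound).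
  destruct (RInt_damped_mode_le _ _ c _ t mu Ht HQ HP Hsin) as [Hex Hle].
  unfold heat_mode, coefE. split; [exact Hex|].
  eapply Rle_trans; [exact Hle|].
  assert (Hsplit : exp (- mu * t) = exp (- ei * t / 2) * exp (- ej * t / 2)).
  { rewrite <- exp_plus. f_equal. unfold mu. field. }
  rewrite Hsplit. unfold mode_weight. fold ei ej.
  pose proof (exp_pos (- ei * t / 2)). pose proof (exp_pos (- ej * t / 2)).
  pose proof (Rabs_pos c).
  replace (t * (Rp / 2) * (Rpower (2 * dyad K i) th1 * exp (- ei * t / 2)
             * (Rpower (2 * dyad K j) th2 * exp (- ej * t / 2))))
    with (t * ((Rp / 2 * Rpower (2 * dyad K i) th1 * Rpower (2 * dyad K j) th2)
             * (exp (- ei * t / 2) * exp (- ej * t / 2)))) by ring.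
  apply Rmult_le_compat_l; [lra|]. apply Rmult_le_compat_r; [nra | exact Hc].
Qed.

Lemma Rpower_exp w p : Rpower (exp w) p = exp (p * w).
Proof. unfold Rpower. rewrite ln_exp. reflexivity. Qed.

Lemma Rpower_div_le_exp y p : 0 < p -> 0 < y -> Rpower (y / p) p <= exp y.
Proof.
  intros Hp Hy.
  replace (exp y) with (Rpower (exp (y / p)) p) by (rewrite Rpower_exp; f_equal; field; lra).
  apply Rle_Rpower_l; [lra|]. split; [apply Rdiv_lt_0_compat; lra|].
  pose proof (exp_ineq1_le (y / p)). lra.
Qed.

Definition gauss_weight (a th s : R) : R := Rpower s th * exp (- Rpower s (2 * a) / 2).

Lemma gauss_weight_mul_pow_bounded a th : 0 < a -> 0 < th ->
  exists D, 0 < D /\ forall s, 0 < s -> Rpower s th * gauss_weight a th s <= D.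
Proof.
  intros Ha Ht. set (p := th / a). set (c := Rpower (/ (2 * p)) p).
  assert (Hp : 0 < p) by (apply Rdiv_lt_0_compat; lra).
  assert (Hc : 0 < c) by apply Rpower_pos.
  exists (/ c). split; [apply Rinv_0_lt_compat; exact Hc|].
  intros s Hs. set (y := Rpower s (2 * a) / 2).
  assert (Hy : 0 < y) by (pose proof (Rpower_pos s (2 * a)); unfold y; lra).
  assert (Hpow : Rpower (y / p) p = Rpower s th * Rpower s th * c).
  { unfold c. replace (y / p) with (Rpower s (2 * a) * / (2 * p)) by (unfold y; field; lra).
    rewrite <- Rpower_mult_distr by (try apply Rpower_pos; apply Rinv_0_lt_compat; lra).
    rewrite Rpower_mult, <- Rpower_plus. do 2 f_equal. unfold p. field. lra. }
  pose proof (Rpower_div_le_exp y p Hp Hy) as Hexp. rewrite Hpow in Hexp.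
  unfold gauss_weight. replace (- Rpower s (2 * a) / 2) with (- y) by (unfold y; field).
  rewrite exp_Ropp.
  pose proof (exp_pos y).
  apply (Rmult_le_reg_r (c * exp y)); [nra|].
  replace (Rpower s th * (Rpower s th * / exp y) * (c * exp y))
    with (Rpower s th * Rpower s th * c) by (field; lra).
  replace (/ c * (c * exp y)) with (exp y) by (field; lra). exact Hexp.
Qed.

(* [Phi] increases from 0 to 1, and the gap [Phi (2 s) - Phi s] behaves like
   [s^th] near 0 and like [s^-th] near infinity, so it dominates [gauss_weight]. *)
Definition Phi (th s : R) : R := Rpower s th / (1 + Rpower s th).

Lemma Phi_bounds th s : 0 <= Phi th s <= 1.
Proof.
  unfold Phi. pose proof (Rpower_pos s th). split.
  - apply Rmult_le_pos; [lra | left; apply Rinv_0_lt_compat; lra].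
  - apply (Rmult_le_reg_r (1 + Rpower s th)); [lra|].
    unfold Rdiv. rewrite Rmult_assoc, Rinv_l; lra.
Qed.

Lemma gauss_weight_le_Phi_step a th : 0 < a -> 0 < th ->
  exists C0, 0 < C0 /\ forall s, 0 < s -> gauss_weight a th s <= C0 * (Phi th (2 * s) - Phi th s).
Proof.
  intros Ha Ht. destruct (gauss_weight_mul_pow_bounded a th Ha Ht) as [D [HD HDb]].
  set (rho := Rpower 2 th).
  assert (Hrho : 1 < rho).
  { unfold rho. rewrite <- (Rpower_O 2) by lra. apply Rpower_lt; lra. }
  exists (2 * rho * (1 + D) / (rho - 1)). split; [apply Rdiv_lt_0_compat; nra|].
  intros s Hs. pose proof (HDb s Hs) as HB. unfold gauss_weight in *.
  unfold Phi. rewrite <- Rpower_mult_distr by lra. fold rho.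
  set (z := Rpower s th) in *. set (E := exp (- Rpower s (2 * a) / 2)) in *.
  assert (Hz : 0 < z) by apply Rpower_pos.
  assert (HE : 0 < E) by apply exp_pos.
  assert (HE1 : E <= 1).
  { unfold E. rewrite <- exp_0. apply exp_le_exp_of_le. pose proof (Rpower_pos s (2 * a)). lra. }
  assert (Hprod : (1 + rho * z) * (1 + z) <= 2 * rho * (1 + z * z)).
  { assert (0 <= rho * ((z - 1) * (z - 1))) by (apply Rmult_le_pos; [lra | apply Rle_0_sqr]).
    assert (0 <= (rho - 1) * (1 + z)) by nra. nra. }
  assert (Hkey : z * E * ((1 + rho * z) * (1 + z)) <= 2 * rho * (1 + D) * z).
  { assert (E * ((1 + rho * z) * (1 + z)) <= 2 * rho * (1 + D)) by nra. nra. }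
  replace (2 * rho * (1 + D) / (rho - 1) * (rho * z / (1 + rho * z) - z / (1 + z)))
    with (2 * rho * (1 + D) * z * / ((1 + rho * z) * (1 + z))) by (field; nra).
  assert (Hq : 0 < (1 + rho * z) * (1 + z)) by nra.
  apply (Rmult_le_reg_r ((1 + rho * z) * (1 + z))); [exact Hq|].
  rewrite (Rmult_assoc (2 * rho * (1 + D) * z)), Rinv_l by lra. lra.
Qed.

Lemma sum_dyadic_le_telescope (f F : R -> R) C0 s1 n : 0 < s1 ->
  (forall s, 0 < s -> f s <= C0 * (F (2 * s) - F s)) ->
  sum_list (fun i => f (2 ^ (i - 1) * s1)) (seq 1 n) <= C0 * (F (2 ^ n * s1) - F s1).
Proof.
  intros Hs1 Hf. induction n as [|n IH].
  - simpl. rewrite Rmult_1_l. lra.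
  - rewrite seq_S, sum_list_app. simpl. rewrite Nat.sub_0_r.
    pose proof (Hf (2 ^ n * s1) ltac:(pose proof (pow_lt 2 n ltac:(lra)); nra)).
    replace (2 * 2 ^ n * s1) with (2 * (2 ^ n * s1)) by ring. lra.
Qed.

Lemma mode_weight_rescale a th t u : 0 < a -> 0 < t -> 0 < u ->
  mode_weight a th t u
    = Rpower 4 th * Rpower t (- (th / (2 * a))) * gauss_weight a th (u / 2 * Rpower t (/ (2 * a))).
Proof.
  intros Ha Ht Hu. unfold mode_weight, gauss_weight.
  set (v := u / 2). set (lam := Rpower t (/ (2 * a))).
  assert (Hv : 0 < v) by (unfold v; lra).
  assert (Hlam : 0 < lam) by apply Rpower_pos.
  replace (2 * u) with (4 * v) by (unfold v; field).
  rewrite <- (Rpower_mult_distr 4 v), <- !(Rpower_mult_distr v lam) by lra.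
  assert (Hlam_pow : Rpower lam (2 * a) = t).
  { unfold lam. rewrite Rpower_mult. replace (/ (2 * a) * (2 * a)) with 1 by (field; lra).
    apply Rpower_1. exact Ht. }
  assert (Hcancel : Rpower t (- (th / (2 * a))) * Rpower lam th = 1).
  { unfold lam. rewrite Rpower_mult, <- Rpower_plus.
    replace (- (th / (2 * a)) + / (2 * a) * th) with 0 by (field; lra). apply Rpower_O. exact Ht. }
  rewrite Hlam_pow.
  replace (- (Rpower v (2 * a) * t) / 2) with (- Rpower v (2 * a) * t / 2) by field.
  transitivity (Rpower 4 th * Rpower v th * exp (- Rpower v (2 * a) * t / 2)
                * (Rpower t (- (th / (2 * a))) * Rpower lam th)); [rewrite Hcancel|]; ring.
Qed.

Lemma sum_mode_weight_le a th : 0 < a -> 0 < th -> exists C, 0 < C /\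
  forall (t : R) (K r : nat), 0 < t -> (1 <= K)%nat ->
  sum_list (fun i => mode_weight a th t (dyad K i)) (idx r) <= C * Rpower t (- (th / (2 * a))).
Proof.
  intros Ha Hth. destruct (gauss_weight_le_Phi_step a th Ha Hth) as [C0 [HC0 Hstep]].
  exists (Rpower 4 th * C0). split; [pose proof (Rpower_pos 4 th); nra|].
  intros t K r Ht HK.
  set (s1 := INR K / 2 * Rpower t (/ (2 * a))).
  assert (Hs1 : 0 < s1).
  { pose proof (le_INR _ _ HK). pose proof (Rpower_pos t (/ (2 * a))). simpl in *. unfold s1; nra. }
  set (T := Rpower t (- (th / (2 * a)))).
  assert (HT : 0 < T) by apply Rpower_pos.
  rewrite (sum_list_ext _ (fun i => (Rpower 4 th * T) * gauss_weight a th (2 ^ (i - 1) * s1))).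
  2: { intros i _. pose proof (dyad_ge1 K i HK).
       rewrite mode_weight_rescale by lra. unfold dyad, s1. do 2 f_equal. field. }
  rewrite sum_list_scal_l.
  pose proof (sum_dyadic_le_telescope (gauss_weight a th) (Phi th) C0 s1 r Hs1 Hstep).
  pose proof (Phi_bounds th (2 ^ r * s1)). pose proof (Phi_bounds th s1).
  pose proof (Rpower_pos 4 th).
  assert (sum_list (fun i => gauss_weight a th (2 ^ (i - 1) * s1)) (idx r) <= C0) by (unfold idx; nra).
  replace (Rpower 4 th * C0 * T) with (Rpower 4 th * T * C0) by ring.
  apply Rmult_le_compat_l; nra.
Qed.

Section DuhamelBounds.
Variables (r K : nat) (b1 b2 a2 th1 th2 : R).
Hypotheses (Ha2 : 0 < a2) (Hth1 : 0 < th1) (Hth2 : 0 < th2) (HK : (1 <= K)%nat).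

Lemma norm3_b11_le x t : 0 < t ->
  norm3 (b11 r K b1 b2 a2 th1 th2 x t)
    <= t * (Rpower (INR r) (- b1 - b2) / 2)
       * (sum_list (fun i => mode_weight a2 th1 t (dyad K i)) (idx r)
          * sum_list (fun j => mode_weight a2 th2 t (dyad K j)) (idx r)).
Proof.
  intros Ht. unfold b11. rewrite norm3_duhamel_along_vprime by apply E1_along_vprime.
  rewrite (RInt_ext _ (fun tau => sum_list (fun i => sum_list (fun j =>
             E1_mode r K b1 b2 a2 th1 th2 x (t - tau) tau i j) (idx r)) (idx r)))
    by (intros; apply amplitude_frac_heat_E1).
  apply Rabs_RInt_double_sum_le. intros i j Hi Hj. apply in_seq in Hi, Hj.
  unfold E1_mode. destruct (Nat.eqb_spec i j) as [_|Hij].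
  - split; [apply ex_RInt_const|].
    rewrite RInt_const. unfold scal; simpl; unfold mult; simpl. rewrite Rmult_0_r, Rabs_R0.
    pose proof (Rpower_pos (INR r) (- b1 - b2)).
    pose proof (mode_weight_nonneg a2 th1 t (dyad K i)).
    pose proof (mode_weight_nonneg a2 th2 t (dyad K j)).
    apply Rmult_le_pos; [nra | apply Rmult_le_pos; assumption].
  - destruct (norm3_diff_freq_ge K i j ltac:(lia) ltac:(lia) Hij) as [Hqi Hqj].
    apply RInt_heat_mode_le; auto; lra.
Qed.

Lemma norm3_b12_le x t : 0 < t ->
  norm3 (b12 r K b1 b2 a2 th1 th2 x t)
    <= t * (Rpower (INR r) (- b1 - b2) / 2)
       * (sum_list (fun i => mode_weight a2 th1 t (dyad K i)) (idx r)
          * sum_list (fun j => mode_weight a2 th2 t (dyad K j)) (idx r)).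
Proof.
  intros Ht. unfold b12. rewrite norm3_duhamel_along_vprime by apply E2_along_vprime.
  rewrite (RInt_ext _ (fun tau => sum_list (fun i => sum_list (fun j =>
             E2_mode r K b1 b2 a2 th1 th2 x (t - tau) tau i j) (idx r)) (idx r)))
    by (intros; apply amplitude_frac_heat_E2).
  apply Rabs_RInt_double_sum_le. intros i j _ _.
  pose proof (norm3_sum_freq_ge K i j).
  pose proof (dyad_ge1 K i HK). pose proof (dyad_ge1 K j HK).
  apply RInt_heat_mode_le; auto; lra.
Qed.

End DuhamelBounds.

Theorem lemma4p5 :
  forall (b1 b2 a2 th1 th2 : R),
    0 < b1 -> 0 < b2 -> 0 < a2 -> 0 < th1 -> 0 < th2 ->
    exists C : R, 0 < C /\
      forall (r K : nat) (t : R), (1 <= r)%nat -> (1 <= K)%nat -> 0 < t ->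
        forall x y : vec3,
          norm3 (b11 r K b1 b2 a2 th1 th2 x t) + norm3 (b12 r K b1 b2 a2 th1 th2 y t)
          <= C * Rpower (INR r) (- b1 - b2) * Rpower t (1 - (th1 + th2) / (2 * a2)).
Proof.
  intros b1 b2 a2 th1 th2 _ _ Ha Hth1 Hth2.
  destruct (sum_mode_weight_le a2 th1 Ha Hth1) as [C1 [HC1 Hsum1]].
  destruct (sum_mode_weight_le a2 th2 Ha Hth2) as [C2 [HC2 Hsum2]].
  exists (C1 * C2). split; [nra|].
  intros r K t _ HK Ht x y.
  pose proof (norm3_b11_le r K b1 b2 a2 th1 th2 Ha Hth1 Hth2 HK x t Ht) as Hb11.
  pose proof (norm3_b12_le r K b1 b2 a2 th1 th2 Ha Hth1 Hth2 HK y t Ht) as Hb12.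
  pose proof (Hsum1 t K r Ht HK) as HS1. pose proof (Hsum2 t K r Ht HK) as HS2.
  set (S1 := sum_list (fun i => mode_weight a2 th1 t (dyad K i)) (idx r)) in *.
  set (S2 := sum_list (fun j => mode_weight a2 th2 t (dyad K j)) (idx r)) in *.
  set (T1 := Rpower t (- (th1 / (2 * a2)))) in *. set (T2 := Rpower t (- (th2 / (2 * a2)))) in *.
  set (Rp := Rpower (INR r) (- b1 - b2)) in *.
  assert (Hexponent : Rpower t (1 - (th1 + th2) / (2 * a2)) = t * T1 * T2).
  { unfold T1, T2. rewrite <- (Rpower_1 t) at 2 by lra. rewrite <- !Rpower_plus.
    f_equal. field. lra. }
  assert (HS : S1 * S2 <= (C1 * T1) * (C2 * T2)).
  { apply Rmult_le_compat; [| | exact HS1 | exact HS2];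
      apply sum_list_nonneg; intros; apply mode_weight_nonneg. }
  assert (HRp : 0 < Rp) by apply Rpower_pos.
  rewrite Hexponent.
  assert (t * (Rp / 2) * (S1 * S2) <= t * (Rp / 2) * ((C1 * T1) * (C2 * T2)))
    by (apply Rmult_le_compat_l; [nra | exact HS]).
  nra.
Qed.
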